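(* Let $G$ be a finite group and $\xi$ a linear character of $G$. Then $$|\{\chi\in G^*\mid\chi=\bar\chi\otimes\xi\}|+\tfrac12|\{\chi\in G^*\mid\chi\neq\bar\chi\otimes\xi\}|=|G_{**}|-|\{C\mid C=C^{-1},\ \xi(C)=-1\}|,$$ where $C$ runs over conjugacy classes of $G$ and $\xi(C)$ is the value of $\xi$ on $C$.
   Context: $G^*$ is the set of irreducible complex characters of $G$; $\bar\chi\otimes\xi$ is the character $g\mapsto\overline{\chi(g)}\xi(g)$. For a conjugacy class $C$, $C^{-1}=\{c^{-1}\mid c\in C\}$. $G_{**}=\{C_g\cup C_{g^{-1}}\mid g\in G\}$, where $C_g$ is the conjugacy class of $g$. *)

From HB Require Import structures.
From mathcomp Require Import all_boot all_order all_algebra all_fingroup all_solvable all_field all_character.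
Set Implicit Arguments. Unset Strict Implicit. Unset Printing Implicit Defensive.
Import GRing.Theory Num.Theory.

Definition set_inv (gT : finGroupType) (C : {set gT}) : {set gT} :=
  [set (c^-1)%g | c in C].

Definition Gstarstar (gT : finGroupType) (G : {group gT}) : {set {set gT}} :=
  [set ((g ^: G) :|: ((g^-1)%g ^: G))%g | g in G].

From HB Require Import structures.
From mathcomp Require Import all_boot all_order all_algebra all_fingroup all_solvable all_field all_character.
From mathcomp Require Import ring.
Set Implicit Arguments. Unset Strict Implicit. Unset Printing Implicit Defensive.
Import Order.TTheory GRing.Theory Num.Theory.
Local Open Scope ring_scope.

(* Let k be the number of classes, r the number of real (self-inverse) classes
   and a the number of irreducible chi with chi = chi^* xi.  The map
   C |-> C :|: C^-1 has fibres {C, C^-1}, so |G_**| = (k + r) / 2.  Summing the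
   second orthogonality relation against xi^*, a = \sum_i '[chi_i, chi_i^* xi]
   is the sum of xi over the real classes.  On a real class xi(x) = xi(x^-1) =
   xi(x)^-1, so xi = 1 or -1 there and a = r - 2 #{real C | xi(C) = -1}.  As
   k irreducible characters exist, the left-hand side is (k + a) / 2. *)

Lemma sum_natb_card (R : nzSemiRingType) (T : finType) (A : {set T}) (P : pred T) :
  \sum_(i in A) (P i)%:R = #|[set i in A | P i]|%:R :> R.
Proof.
rewrite -sum1_card natr_sum big_mkcond [RHS]big_mkcond /=.
by apply: eq_bigr => i _; rewrite inE; case: (i \in A); case: (P i).
Qed.

Lemma card_imset_sum_fibres (R : numFieldType) (T T' : finType) (f : T -> T')
    (A : {set T}) :
  #|f @: A|%:R = \sum_(a in A) (#|[set b in A | f b == f a]|%:R)^-1 :> R.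
Proof.
rewrite (partition_big_imset f) /= -sum1_card natr_sum.
apply: eq_bigr => _ /imsetP[a Aa ->].
rewrite (eq_bigr (fun _ => (#|[set b in A | f b == f a]|%:R)^-1)); last first.
  by move=> b /andP[_ /eqP ->].
rewrite sumr_const.
have -> : #|[pred b in A | f b == f a]| = #|[set b in A | f b == f a]|.
  by apply: eq_card => b; rewrite !inE.
rewrite -[RHS]mulr_natr mulVf // pnatr_eq0 -lt0n.
by apply/card_gt0P; exists a; rewrite inE Aa eqxx.
Qed.

Section InverseClasses.
Variables (gT : finGroupType) (G : {group gT}).

Lemma set_invE (C : {set gT}) : set_inv C = (C^-1)%g.
Proof.
apply/setP=> x; rewrite mem_invg; apply/imsetP/idP => [[c Cc ->]|Cx].
  by rewrite invgK.
by exists x^-1%g; rewrite ?invgK.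
Qed.

Lemma set_invK : involutive (@set_inv gT).
Proof. by move=> C; rewrite !set_invE invgK. Qed.

Lemma set_inv_class x : set_inv (x ^: G)%g = (x^-1 ^: G)%g.
Proof. by rewrite set_invE classVg. Qed.

Lemma set_inv_classes C : C \in classes G -> set_inv C \in classes G.
Proof. by case/imsetP=> y Gy ->; rewrite set_inv_class mem_classes ?groupV. Qed.

Lemma classVP x : reflect (x \in x^-1 ^: G)%g ((x ^: G)%g == set_inv (x ^: G)%g).
Proof.
rewrite set_inv_class; apply: (iffP eqP) => [<- | /class_eqP //].
exact: class_refl.
Qed.

Lemma Gstarstar_classes : Gstarstar G = [set C :|: set_inv C | C in classes G].
Proof.
rewrite /Gstarstar /classes -imset_comp; apply: eq_imset => g /=.
by rewrite set_inv_class.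
Qed.

Lemma classes_setUV_fibre C : C \in classes G ->
  [set D in classes G | D :|: set_inv D == C :|: set_inv C] = [set C; set_inv C].
Proof.
move=> clC; apply/setP => D; rewrite !inE.
apply/andP/orP => [[/imsetP[z Gz ->] eqD] | [/eqP-> | /eqP->]].
- have : z \in C :|: set_inv C by rewrite -(eqP eqD) inE class_refl.
  case/imsetP: clC => y Gy ->; rewrite set_inv_class inE.
  by case/orP => /class_eqP ->; [left|right].
- by rewrite clC.
- by rewrite set_inv_classes // set_invK setUC.
Qed.

Lemma card_Gstarstar :
  #|Gstarstar G|%:R = (#|classes G|%:R
      + #|[set C in classes G | C == set_inv C]|%:R) / 2 :> algC.
Proof.
rewrite Gstarstar_classes card_imset_sum_fibres -sum_natb_card -sum1_card.
rewrite natr_sum -big_split mulr_suml; apply: eq_bigr => C clC.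
rewrite classes_setUV_fibre // cards2.
by case: eqP => _ /=; field; rewrite ?pnatr_eq0.
Qed.

Lemma sum_cent1_by_classes (R : nzRingType) (F : gT -> R) :
    {in G &, forall g h, F (g ^ h)%g = F g} ->
  \sum_(g in G) #|'C_G[g]%g|%:R * F g
    = #|G|%:R * \sum_(C in classes G) F (repr C).
Proof.
move=> FJ; rewrite sum_by_classes => [|g h Gg Gh]; last first.
  by rewrite (FJ g h) // cent1J -{1}(conjGid Gh) -conjIg cardJg.
rewrite mulr_sumr; apply: eq_bigr => C /repr_classesP[_ defC].
by rewrite mulrA -natrM {1}defC -index_cent1 mulnC Lagrange ?subsetIl.
Qed.

End InverseClasses.

Section TwistedRealCharacters.
Variables (gT : finGroupType) (G : {group gT}) (xi : 'CF(G)).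
Hypothesis xi_lin : xi \is a linear_char.

Lemma lin_char_classV y : y \in G -> (y \in y^-1 ^: G)%g -> xi y = 1 \/ xi y = -1.
Proof.
move=> Gy /class_eqP yV.
have xiV : xi y^-1%g = xi y.
  by rewrite -(cfun_repr xi y^-1) -yV cfun_repr.
have : xi y ^+ 2 == 1.
  by rewrite expr2 -{2}xiV (lin_charV xi_lin Gy) mulfV ?(lin_char_neq0 xi_lin Gy).
by rewrite sqrf_eq1 => /orP[/eqP|/eqP]; [left|right].
Qed.

Lemma lin_char_real_classes C : C \in classes G -> C == set_inv C ->
  xi (repr C) = 1 - 2 * (xi (repr C) == -1)%:R.
Proof.
move=> /repr_classesP[Gx defC]; set x := repr C in Gx defC *.
rewrite [in X in X -> _]defC => /classVP xV.
have xN1_1 : (1 == -1 :> algC) = false by rewrite gt_eqF // (lt_trans (ltrN10 _)) ?ltr01.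
by case: (lin_char_classV Gx xV) => ->; rewrite ?eqxx ?xN1_1 /=; ring.
Qed.

Lemma cfdot_irr_conjC_mul i :
  '['chi_i, ('chi_i)^*%CF * xi] = ('chi_i == ('chi_i)^*%CF * xi)%:R.
Proof.
have: ('chi_i)^*%CF * xi \in irr G by rewrite mulrC mul_lin_irr ?cfConjC_irr.
by case/irrP => j ->; rewrite cfdot_irr (inj_eq irr_inj).
Qed.

Lemma sum_cfdot_irr_conjC_mul :
  \sum_i '['chi_i, ('chi_i)^*%CF * xi]
    = #|G|%:R^-1 * \sum_(x in G) #|'C_G[x]%g|%:R * ((xi x)^* *+ (x \in x^-1 ^: G)%g).
Proof.
rewrite (eq_bigr _ (fun i _ => cfdotE _ _)) -mulr_sumr exchange_big /=.
congr (_ * _); apply: eq_bigr => x Gx.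
rewrite mulrnAr mulrC -mulrnAr -second_orthogonality_relation ?groupV //.
rewrite mulr_sumr; apply: eq_bigr => i _.
rewrite !cfunE rmorphM /= conjCK char_inv ?irr_char // conjCK; ring.
Qed.

Lemma card_irr_conjC_mul_fixed :
  #|[set i : Iirr G | 'chi_i == ('chi_i)^*%CF * xi]|%:R
    = \sum_(C in classes G | C == set_inv C) xi (repr C).
Proof.
rewrite -sum1_card natr_sum big_mkcond /=.
rewrite (eq_bigr (fun i => '['chi_i, ('chi_i)^*%CF * xi])) => [|i _]; last first.
  by rewrite cfdot_irr_conjC_mul inE; case: eqP.
rewrite sum_cfdot_irr_conjC_mul sum_cent1_by_classes => [|g h Gg Gh]; last first.
  by rewrite cfunJ // -conjVg classGidl // -{1}(classGidr g^-1 Gh) memJ_conjg.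
rewrite mulKf ?pnatr_eq0 -?lt0n ?cardG_gt0 // big_mkcondr /=.
apply: eq_bigr => C /repr_classesP[Gx defC]; set x := repr C in Gx defC *.
rewrite [in RHS]defC; case: classVP => [xV | /negP/negbTE-> //]; rewrite xV.
by case: (lin_char_classV Gx xV) => ->; rewrite ?rmorphN rmorph1.
Qed.

End TwistedRealCharacters.

Theorem proposition3p8 (gT : finGroupType) (G : {group gT}) (xi : 'CF(G))
    (Hxi : xi \is a linear_char) :
  (#|[set i : Iirr G | 'chi_i == ((('chi_i)^*)%CF * xi)]|%:R
     + #|[set i : Iirr G | 'chi_i != ((('chi_i)^*)%CF * xi)]|%:R / 2%:R : algC)
   = #|Gstarstar G|%:R
     - #|[set C in classes G | (C == set_inv C) && (xi (repr C) == -1)]|%:R.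
Proof.
set A := [set i : Iirr G | _].
have -> : [set i : Iirr G | 'chi_i != ('chi_i)^*%CF * xi] = ~: A.
  by apply/setP => i; rewrite !inE.
have cardAC : #|~: A|%:R = #|classes G|%:R - #|A|%:R :> algC.
  by apply/eqP; rewrite eq_sym subr_eq addrC -natrD cardsC card_ord NirrE.
rewrite cardAC card_Gstarstar {cardAC}/A (card_irr_conjC_mul_fixed Hxi) big_mkcondr /=.
rewrite (eq_bigr (fun C => (C == set_inv C)%:R
    - 2 * ((C == set_inv C) && (xi (repr C) == -1))%:R)) => [|C clC]; last first.
  by case: ifP => [/(lin_char_real_classes Hxi clC) | _]; rewrite ?mulr0 ?subr0.
by rewrite sumrB -mulr_sumr !sum_natb_card; field.
Qed.
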